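(* If $G$ is a connected indecomposable graph on $[n]$ with $\operatorname{pv}(G)>0$, then $\operatorname{pv}(G)-\alpha(G)>0$.
   Context: A pendant vertex is a vertex of degree one; $\operatorname{pv}(G)$ is the number of pendant vertices of $G$. For $v\in V(G)$, $\operatorname{cdeg}_G(v)$ is the number of maximal cliques of $G$ containing $v$ and $\operatorname{pdeg}_G(v)$ is the number of pendant vertices adjacent to $v$. A vertex $v$ with $\operatorname{pdeg}_G(v)\ge1$ is of type 1 if $\operatorname{cdeg}_G(v)=\operatorname{pdeg}_G(v)+1$ (and of type 2 if $\operatorname{cdeg}_G(v)\ge\operatorname{pdeg}_G(v)+2$); $\alpha(G)$ is the number of type 1 vertices. A vertex is free if it belongs to exactly one maximal clique. $G$ is decomposable if $G=G_1\cup G_2$ with $V(G_1)\cap V(G_2)=\{v\}$, $v$ free in both $G_1$ and $G_2$; otherwise indecomposable. *)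

From mathcomp Require Import all_boot.
Set Implicit Arguments. Unset Strict Implicit. Unset Printing Implicit Defensive.

Section Graphs.
Variable n : nat.
Variable e : rel 'I_n.

Definition simple_graph : Prop := symmetric e /\ irreflexive e.

Definition connected_graph : Prop := forall x y : 'I_n, connect e x y.

Definition clique_in (S C : {set 'I_n}) : bool :=
  (C \subset S) && [forall x in C, forall y in C, (x != y) ==> e x y].

Definition maxclique_in (S C : {set 'I_n}) : bool :=
  clique_in S C && [forall D : {set 'I_n}, (clique_in S D && (C \subset D)) ==> (D == C)].

Definition cdeg_in (S : {set 'I_n}) (v : 'I_n) : nat :=
  #|[set C : {set 'I_n} | maxclique_in S C & v \in C]|.

Definition cdeg (v : 'I_n) : nat := cdeg_in setT v.

Definition free_in (S : {set 'I_n}) (v : 'I_n) : bool := cdeg_in S v == 1.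

Definition deg (v : 'I_n) : nat := #|[set u | e v u]|.

Definition pendant (v : 'I_n) : bool := deg v == 1.

Definition pv : nat := #|[set v | pendant v]|.

Definition pdeg (v : 'I_n) : nat := #|[set u | e v u & pendant u]|.

Definition type1 (v : 'I_n) : bool := (1 <= pdeg v) && (cdeg v == (pdeg v).+1).

Definition alpha : nat := #|[set v | type1 v]|.

(* G = G1 ∪ G2 with V(G1) ∩ V(G2) = {v}, v free in G1 and G2; G1, G2 nontrivial.
   Since the vertex sets meet only in v, every edge of G lies in G1 or G2 and
   G1 = G[V1], G2 = G[V2]. *)
Definition decomposable : Prop :=
  exists (V1 V2 : {set 'I_n}) (v : 'I_n),
    [/\ V1 :|: V2 = setT, V1 :&: V2 = [set v],
        (1 < #|V1|) && (1 < #|V2|),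
        (forall x y, e x y -> ((x \in V1) && (y \in V1)) || ((x \in V2) && (y \in V2)))
      & free_in V1 v && free_in V2 v].

Definition indecomposable : Prop := ~ decomposable.

End Graphs.

From mathcomp Require Import all_boot zify.
Set Implicit Arguments. Unset Strict Implicit. Unset Printing Implicit Defensive.

(* If a type 1 vertex v has exactly one pendant neighbour u, then v lies in
   exactly two maximal cliques, the edge {u, v} and one other clique C, and G
   splits at v into the edge uv and G - u, with v free in both parts (its only
   maximal clique in G - u is C).  So in an indecomposable graph every type 1
   vertex has at least two pendant neighbours; as a pendant vertex has a single
   neighbour, summing pdeg over the type 1 vertices gives 2 alpha <= pv, whence
   alpha < pv when pv > 0. *)

Section Cliques.
Variables (n : nat) (e : rel 'I_n).

Lemma cliqueP (S C : {set 'I_n}) :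
  reflect (C \subset S /\ {in C &, forall x y, x != y -> e x y}) (clique_in e S C).
Proof.
apply: (iffP andP) => -[sCS cliqueC]; split => //.
  move=> x y xC yC; move/forallP/(_ x)/implyP/(_ xC): cliqueC.
  by move/forallP/(_ y)/implyP/(_ yC)/implyP.
by apply/forallP => x; apply/implyP => xC; apply/forallP => y; apply/implyP => yC;
  apply/implyP; apply: cliqueC.
Qed.

Lemma clique_inE (S C : {set 'I_n}) :
  clique_in e S C = (C \subset S) && clique_in e setT C.
Proof. by rewrite /clique_in subsetT. Qed.

Lemma maxcliqueP (S C : {set 'I_n}) :
  reflect (clique_in e S C /\ forall D, clique_in e S D -> C \subset D -> D = C)
          (maxclique_in e S C).
Proof.
apply: (iffP andP) => -[cC maxC]; split => //.
  by move=> D cD sCD; apply/eqP; move/forallP/(_ D): maxC; rewrite cD sCD.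
by apply/forallP => D; apply/implyP => /andP[cD /(maxC D cD) ->].
Qed.

Lemma clique_maxclique (S D0 : {set 'I_n}) :
  clique_in e S D0 -> exists2 D, maxclique_in e S D & D0 \subset D.
Proof.
move=> cD0.
have [|D /andP[cD sD0D] maxD] :=
  @arg_maxnP _ D0 (fun D => clique_in e S D && (D0 \subset D)) (fun D => #|D|).
  by rewrite cD0 subxx.
exists D => //; apply/maxcliqueP; split => // D' cD' sDD'.
apply/eqP; rewrite eq_sym eqEcard sDD' /=.
by apply: maxD; rewrite cD' (subset_trans sD0D sDD').
Qed.

Lemma free_in_greatest_clique (S A : {set 'I_n}) (v : 'I_n) :
  clique_in e S A -> v \in A ->
  (forall D, clique_in e S D -> v \in D -> D \subset A) -> free_in e S v.
Proof.
move=> cA vA maxA.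
have mA : maxclique_in e S A.
  apply/maxcliqueP; split => // D cD sAD; apply/eqP; rewrite eqEsubset sAD andbT.
  exact: maxA cD (subsetP sAD v vA).
rewrite /free_in /cdeg_in (_ : [set C | _ & _] = [set A]) ?cards1 //.
apply/setP => C; rewrite !inE; apply/andP/eqP => [[/maxcliqueP[cC maxC] vC]|->] //.
by rewrite (maxC A cA (maxA C cC vC)).
Qed.

End Cliques.

Section PendantEdge.
Variables (n : nat) (e : rel 'I_n).
Hypotheses (e_sym : symmetric e) (e_irr : irreflexive e).
Variables u v : 'I_n.
Hypotheses (e_vu : e v u) (pendant_u : pendant e u).

Lemma pendant_neighbor x : e u x -> x = v.
Proof.
move: pendant_u; rewrite /pendant /deg => /cards1P[w deg_u] e_ux.
have : x \in [set w] by rewrite -deg_u inE.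
have : v \in [set w] by rewrite -deg_u inE e_sym.
by rewrite !inE => /eqP -> /eqP ->.
Qed.

Lemma pendant_neq : u != v.
Proof. by apply: contraTneq e_vu => <-; rewrite e_irr. Qed.

Lemma pendant_edge_clique (S : {set 'I_n}) :
  [set u; v] \subset S -> clique_in e S [set u; v].
Proof.
move=> sAS; apply/cliqueP; split => // x y; rewrite !inE.
by case/orP => /eqP -> /orP[] /eqP ->; rewrite ?eqxx // e_sym.
Qed.

Lemma clique_pendant_sub (S D : {set 'I_n}) :
  clique_in e S D -> u \in D -> D \subset [set u; v].
Proof.
case/cliqueP => _ cD uD; apply/subsetP => x xD; rewrite !inE.
have [//|xu] := eqVneq x u.
by rewrite (pendant_neighbor (cD u x uD xD _)) ?eqxx ?orbT // eq_sym.
Qed.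

Lemma pendant_edge_maxclique : maxclique_in e setT [set u; v].
Proof.
apply/maxcliqueP; split => [|D cD sAD]; first exact/pendant_edge_clique/subsetT.
apply/eqP; rewrite eqEsubset sAD andbT.
by apply: clique_pendant_sub cD _; apply: (subsetP sAD); rewrite !inE eqxx.
Qed.

Lemma other_maxclique : cdeg e v = 2 ->
  exists C, [/\ clique_in e setT C, v \in C, ~~ (C \subset [set u; v])
              & forall D, clique_in e setT D -> v \in D -> u \notin D -> D \subset C].
Proof.
move=> cdeg_v; set M := [set C | maxclique_in e setT C & v \in C].
have AM : [set u; v] \in M by rewrite inE pendant_edge_maxclique !inE eqxx orbT.
have /cards1P[C MC] : #|M :\ [set u; v]| == 1.
  have cardM : #|M| = 2 := cdeg_v.
  by move: (cardsD1 [set u; v] M); rewrite AM cardM add1n => -[<-].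
have : C \in M :\ [set u; v] by rewrite MC set11.
rewrite !inE => /and3P[CnA /maxcliqueP[cC maxC] vC].
exists C; split => // [|D cD vD uD].
  apply: contra CnA => sCA; apply/eqP/esym.
  exact: maxC _ (pendant_edge_clique (subsetT _)) sCA.
have [D' mD' sDD'] := clique_maxclique cD.
have [D'A|D'nA] := eqVneq D' [set u; v].
  apply/subsetP => x xD; move: (subsetP sDD' x xD); rewrite D'A !inE.
  by case/orP => /eqP xE; [move: uD; rewrite -xE xD | rewrite xE].
have : D' \in M :\ [set u; v] by rewrite !inE D'nA mD' (subsetP sDD' v vD).
by rewrite MC inE => /eqP <-.
Qed.

Lemma pendant_cdeg2_decomposable : cdeg e v = 2 -> decomposable e.
Proof.
case/other_maxclique => C [cC vC CnsubA maxC].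
have uC : u \notin C by apply: contra CnsubA; apply: clique_pendant_sub cC.
have /subsetPn[w wC] := CnsubA; rewrite !inE negb_or => /andP[wu wv].
exists [set u; v], [set~ u], v; split.
- by apply/setP => x; rewrite !inE; case: (x == u); rewrite ?orbT.
- apply/setP => x; rewrite !inE; have [->|_] := eqVneq x u; last by rewrite andbT.
  by rewrite (negbTE pendant_neq).
- rewrite cards2 pendant_neq /=.
  apply: leq_trans (subset_leq_card (_ : [set v; w] \subset [set~ u])).
    by rewrite cards2 eq_sym wv.
  by apply/subsetP => x; rewrite !inE => /orP[] /eqP ->; rewrite ?wu // eq_sym pendant_neq.
- move=> x y e_xy; rewrite !inE.
  have [xu|xnu] := eqVneq x u.
    by move: e_xy; rewrite xu => /pendant_neighbor ->; rewrite eqxx orbT.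
  have [yu|ynu] := eqVneq y u; last by rewrite orbT.
  by rewrite (pendant_neighbor (_ : e u x)) ?eqxx ?orbT // e_sym -yu.
- apply/andP; split.
    apply: free_in_greatest_clique (pendant_edge_clique _) _ _ => //.
      by rewrite !inE eqxx orbT.
    by move=> D /cliqueP[].
  apply: (free_in_greatest_clique (A := C)) => //.
    by rewrite clique_inE cC subsetC sub1set inE uC.
  move=> D; rewrite clique_inE subsetC sub1set inE => /andP[uD cD] vD.
  exact: maxC.
Qed.

End PendantEdge.

Lemma sum_pdeg (n : nat) (e : rel 'I_n) : symmetric e -> \sum_v pdeg e v = pv e.
Proof.
move=> e_sym; rewrite /pv -sum1dep_card.
under eq_bigr => v _ do rewrite /pdeg -sum1dep_card big_mkcond /=.
rewrite exchange_big [RHS]big_mkcond /=; apply: eq_bigr => u _.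
case pendant_u: (pendant e u); last by rewrite big1 // => v _; rewrite andbF.
rewrite -big_mkcond /= sum1dep_card -(eqP pendant_u) /deg.
by apply: eq_card => v; rewrite !inE andbT e_sym.
Qed.

Lemma type1_pdeg_gt1 (n : nat) (e : rel 'I_n) (v : 'I_n) :
  simple_graph e -> indecomposable e -> type1 e v -> 1 < pdeg e v.
Proof.
move=> [e_sym e_irr] indec /andP[pdeg_gt0 /eqP cdeg_v].
rewrite ltn_neqAle eq_sym pdeg_gt0 andbT; apply/negP => /eqP pdeg1; apply: indec.
move: pdeg_gt0; rewrite card_gt0 => /set0Pn[u]; rewrite inE => /andP[e_vu pendant_u].
by apply: (pendant_cdeg2_decomposable e_sym e_irr e_vu pendant_u); rewrite cdeg_v pdeg1.
Qed.

Lemma double_alpha_le_pv (n : nat) (e : rel 'I_n) :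
  simple_graph e -> indecomposable e -> 2 * alpha e <= pv e.
Proof.
move=> simple_e indec; rewrite -(sum_pdeg simple_e.1) (bigID (mem [set v | type1 e v])) /=.
apply: leq_trans (leq_addr _ _); rewrite /alpha mulnC -sum_nat_const.
by apply: leq_sum => v; rewrite inE; apply: type1_pdeg_gt1.
Qed.

Theorem lemma4p3 (n : nat) (e : rel 'I_n) :
  simple_graph e -> connected_graph e -> indecomposable e ->
  0 < pv e -> 0 < pv e - alpha e.
Proof.
move=> simple_e _ indec pv_gt0.
have := double_alpha_le_pv simple_e indec; lia.
Qed.
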